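(* There exist absolute constants $C_S,C_K>0$ such that the following holds. Let $n_1,n_2\ge2$, $1\le s_1\le n_1$, $1\le s_2\le n_2$, $1\le R\le\min\{n_1,n_2\}$, $\Gamma\ge1$, $m\ge1$. Then $$\int_0^{\Gamma\sqrt R/\sqrt m}\sqrt{\log N(S^{R,\Gamma}_{s_1,s_2},\|\cdot\|_F,\sqrt m\,\varepsilon)}\,d\varepsilon\le\sqrt{\frac{C_S\Gamma^2R^2(s_1+s_2)\log(\max\{n_1,n_2\})}{m}},$$ $$\int_0^{\Gamma\sqrt R/\sqrt m}\sqrt{\log N(K^{R,\Gamma}_{s_1,s_2},\|\cdot\|_F,\sqrt m\,\varepsilon)}\,d\varepsilon\le\sqrt{\frac{C_K\Gamma^2R^2(s_1+s_2)\log^3(\max\{n_1,n_2\})}{m}}.$$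
   Context: $N(M,\|\cdot\|,\varepsilon)$ is the minimal number of $\|\cdot\|$-balls of radius $\varepsilon$ covering $M$. $S^{R,\Gamma}_{s_1,s_2}$ is the set of $Z=\sum_{r=1}^R\sigma_ru^r(v^r)^T\in\mathbb{R}^{n_1\times n_2}$ with $|\mathrm{supp}(u^r)|\le s_1$, $|\mathrm{supp}(v^r)|\le s_2$, $\|u^r\|_2=\|v^r\|_2=1$, $\|\sigma\|_2\le\Gamma$. With $K_{n,s}=\{z\in\mathbb{R}^n:\|z\|_2\le1,\|z\|_1\le\sqrt s\}$, $K^{R,\Gamma}_{s_1,s_2}$ is the set of $Z=\sum_{r=1}^R\sigma_ru^r(v^r)^T$ with $u^r\in K_{n_1,s_1}$, $v^r\in K_{n_2,s_2}$, $\|u^r\|_2=\|v^r\|_2=1$, $\|\sigma\|_2\le\Gamma$. *)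

From Stdlib Require Import Reals Lra Lia List Classical ClassicalEpsilon.
Open Scope R_scope.

Fixpoint fsum (n : nat) (f : nat -> R) : R :=
  match n with
  | O => 0
  | S k => fsum k f + f k
  end.

(* vectors in R^n are functions nat -> R (only indices < n matter);
   matrices in R^{n1 x n2} are functions nat -> nat -> R. *)
Definition norm2 (n : nat) (u : nat -> R) : R := sqrt (fsum n (fun i => (u i)^2)).
Definition norm1 (n : nat) (u : nat -> R) : R := fsum n (fun i => Rabs (u i)).
Definition frob (n1 n2 : nat) (A : nat -> nat -> R) : R :=
  sqrt (fsum n1 (fun i => fsum n2 (fun j => (A i j)^2))).

Definition supp_le (n s : nat) (u : nat -> R) : Prop :=
  exists S : list nat, NoDup S /\ (length S <= s)%nat /\
    forall i, (i < n)%nat -> u i <> 0 -> In i S.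

Definition Kset (n s : nat) (z : nat -> R) : Prop :=
  norm2 n z <= 1 /\ norm1 n z <= sqrt (INR s).

Definition rank_sum (Rk : nat) (sigma : nat -> R) (u v : nat -> nat -> R)
  : nat -> nat -> R :=
  fun i j => fsum Rk (fun r => sigma r * u r i * v r j).

Definition Sset (n1 n2 s1 s2 Rk : nat) (Gamma : R) (Z : nat -> nat -> R) : Prop :=
  exists (sigma : nat -> R) (u v : nat -> nat -> R),
    Z = rank_sum Rk sigma u v /\
    (forall r, (r < Rk)%nat ->
       supp_le n1 s1 (u r) /\ supp_le n2 s2 (v r) /\
       norm2 n1 (u r) = 1 /\ norm2 n2 (v r) = 1) /\
    norm2 Rk sigma <= Gamma.

Definition KRset (n1 n2 s1 s2 Rk : nat) (Gamma : R) (Z : nat -> nat -> R) : Prop :=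
  exists (sigma : nat -> R) (u v : nat -> nat -> R),
    Z = rank_sum Rk sigma u v /\
    (forall r, (r < Rk)%nat ->
       Kset n1 s1 (u r) /\ Kset n2 s2 (v r) /\
       norm2 n1 (u r) = 1 /\ norm2 n2 (v r) = 1) /\
    norm2 Rk sigma <= Gamma.

(* M can be covered by k closed Frobenius balls of radius eps
   (centres arbitrary in R^{n1 x n2}) *)
Definition covers (n1 n2 : nat) (M : (nat -> nat -> R) -> Prop) (eps : R) (k : nat)
  : Prop :=
  exists centers : list (nat -> nat -> R), length centers = k /\
    forall Z, M Z -> exists c, In c centers /\ frob n1 n2 (fun i j => Z i j - c i j) <= eps.

Definition covnum (n1 n2 : nat) (M : (nat -> nat -> R) -> Prop) (eps : R) : nat :=
  epsilon (inhabits 0%nat)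
    (fun k => covers n1 n2 M eps k /\ forall k', covers n1 n2 M eps k' -> (k <= k')%nat).

(* the (possibly improper at 0) integral  int_0^T f  is <= B:
   for nonnegative f this is equivalent to: every truncation int_delta^T f
   exists (as a Riemann integral) and is <= B. *)
Definition improper_int_le (f : R -> R) (T B : R) : Prop :=
  forall delta, 0 < delta < T ->
    exists pr : Riemann_integrable f delta T, RiemannInt pr <= B.

(* Dudley chaining.  At the dyadic scale Gamma sqrt R / 2^(k+1) the set is covered by rounding
   sigma and every factor u^r, v^r toward zero on a grid and spelling the roundings as words over
   a finite alphabet of (index, level) pairs.  For s-sparse unit factors the grid of step
   1 / (3 s 2^(k+1)) gives log N <= C R (s1 + s2) (log n + k).  For factors in K_{n,s}, rounding at
   step h keeps at most sqrt s / h entries (an l1 count) with squared error at most h sqrt s, so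
   log N <= C R s 4^k (log n + k0) up to the level k0 ~ log2 n, beyond which all n coordinates are
   rounded.  Summing sqrt (log N) over the dyadic slices of the entropy integral gives
   sqrt (log n) in the first case and, from the k0 ~ log n levels of size sqrt (log n), the
   extra factor log n in the second. *)

From Stdlib Require Import Reals Lra Lia List Classical ClassicalEpsilon ZArith.
From Coquelicot Require Import Coquelicot.
Import ListNotations.
Open Scope R_scope.

Lemma fsum_S n f : fsum (S n) f = fsum n f + f n.
Proof. reflexivity. Qed.

Lemma fsum_ext n f g : (forall i, (i < n)%nat -> f i = g i) -> fsum n f = fsum n g.
Proof.
  induction n as [|n IH]; intros H; simpl; auto.
  rewrite IH, H; auto; intros; apply H; lia.
Qed.

Lemma fsum_le n f g : (forall i, (i < n)%nat -> f i <= g i) -> fsum n f <= fsum n g.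
Proof.
  induction n as [|n IH]; intros H; simpl; [lra|].
  apply Rplus_le_compat; [apply IH; intros|]; apply H; lia.
Qed.

Lemma fsum_const n c : fsum n (fun _ => c) = INR n * c.
Proof. induction n as [|n IH]; simpl fsum; [simpl; lra|]. rewrite IH, S_INR. lra. Qed.

Lemma fsum_nonneg n f : (forall i, (i < n)%nat -> 0 <= f i) -> 0 <= fsum n f.
Proof.
  intros H. replace 0 with (fsum n (fun _ => 0)) by (rewrite fsum_const; ring).
  apply fsum_le; auto.
Qed.

Lemma fsum_add n f g : fsum n (fun i => f i + g i) = fsum n f + fsum n g.
Proof. induction n as [|n IH]; simpl; [lra|]. rewrite IH. lra. Qed.

Lemma fsum_sub n f g : fsum n (fun i => f i - g i) = fsum n f - fsum n g.
Proof. induction n as [|n IH]; simpl; [lra|]. rewrite IH. lra. Qed.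

Lemma fsum_scal n c f : fsum n (fun i => c * f i) = c * fsum n f.
Proof. induction n as [|n IH]; simpl; [lra|]. rewrite IH. lra. Qed.

Lemma fsum_sq_nonneg n (f : nat -> R) : 0 <= fsum n (fun i => f i ^ 2).
Proof. apply fsum_nonneg; intros; nra. Qed.

Lemma fsum_telescope (f Q : nat -> R) c K :
  (forall k, f k <= c * (Q k - Q (S k))) -> fsum K f <= c * (Q 0%nat - Q K).
Proof. induction K as [|K IH]; intros H; simpl; [lra|]. specialize (IH H). specialize (H K). lra. Qed.

Lemma filter_seq_S (p : nat -> bool) n :
  filter p (seq 0 (S n)) = filter p (seq 0 n) ++ (if p n then [n] else []).
Proof. rewrite seq_S, filter_app. simpl. destruct (p n); auto. Qed.

Lemma fsum_le_count (p : nat -> bool) n f c : 0 <= c ->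
  (forall i, (i < n)%nat -> p i = false -> f i = 0) -> (forall i, (i < n)%nat -> f i <= c) ->
  fsum n f <= INR (length (filter p (seq 0 n))) * c.
Proof.
  intros Hc. induction n as [|n IH]; intros H0 Hle; [simpl; lra|].
  rewrite fsum_S, filter_seq_S, length_app, plus_INR.
  assert (fsum n f <= INR (length (filter p (seq 0 n))) * c)
    by (apply IH; intros; [apply H0|apply Hle]; auto; lia).
  destruct (p n) eqn:E; simpl.
  - specialize (Hle n ltac:(lia)). lra.
  - rewrite (H0 n ltac:(lia) E). lra.
Qed.

Lemma count_le_fsum (p : nat -> bool) n g c :
  (forall i, (i < n)%nat -> p i = true -> c <= g i) -> (forall i, (i < n)%nat -> 0 <= g i) ->
  INR (length (filter p (seq 0 n))) * c <= fsum n g.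
Proof.
  induction n as [|n IH]; intros Hge H0; [simpl; lra|].
  rewrite fsum_S, filter_seq_S, length_app, plus_INR.
  assert (INR (length (filter p (seq 0 n))) * c <= fsum n g)
    by (apply IH; intros; [apply Hge|apply H0]; auto; lia).
  destruct (p n) eqn:E; simpl.
  - specialize (Hge n ltac:(lia) E). lra.
  - specialize (H0 n ltac:(lia)). lra.
Qed.

Lemma fsum_mul_sq_le n a b :
  (fsum n (fun i => a i * b i)) ^ 2 <= fsum n (fun i => a i ^ 2) * fsum n (fun i => b i ^ 2).
Proof.
  induction n as [|n IH]; [simpl; lra|]. rewrite !fsum_S.
  set (S := fsum n (fun i => a i * b i)) in *.
  set (A := fsum n (fun i => a i ^ 2)) in *.
  set (B := fsum n (fun i => b i ^ 2)) in *.
  assert (HA : 0 <= A) by apply fsum_sq_nonneg.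
  assert (HB : 0 <= B) by apply fsum_sq_nonneg.
  assert (HAB : Rabs S <= sqrt A * sqrt B).
  { apply Rsqr_incr_0_var; [|apply Rmult_le_pos; apply sqrt_pos].
    rewrite Rsqr_mult, !Rsqr_sqrt, <- Rsqr_abs, Rsqr_pow2 by auto. exact IH. }
  (* AM-GM: 2 sqrt A sqrt B |a b| <= A b^2 + a^2 B *)
  assert (Hcross : 2 * S * (a n * b n) <= A * b n ^ 2 + a n ^ 2 * B).
  { pose proof (sqrt_sqrt A HA). pose proof (sqrt_sqrt B HB).
    pose proof (sqrt_pos A). pose proof (sqrt_pos B).
    assert (S * (a n * b n) <= sqrt A * sqrt B * (Rabs (a n) * Rabs (b n))).
    { rewrite <- Rabs_mult. eapply Rle_trans; [apply Rle_abs|].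
      rewrite Rabs_mult. apply Rmult_le_compat_r; [apply Rabs_pos|auto]. }
    rewrite <- (pow2_abs (a n)), <- (pow2_abs (b n)).
    pose proof (pow2_ge_0 (sqrt A * Rabs (b n) - sqrt B * Rabs (a n))). nra. }
  nra.
Qed.

Lemma fsum_mul_le n a b :
  fsum n (fun i => a i * b i) <= sqrt (fsum n (fun i => a i ^ 2)) * sqrt (fsum n (fun i => b i ^ 2)).
Proof.
  rewrite <- sqrt_mult_alt by apply fsum_sq_nonneg.
  eapply Rle_trans; [apply Rle_abs|]. rewrite <- sqrt_Rsqr_abs.
  apply sqrt_le_1_alt. rewrite Rsqr_pow2. apply fsum_mul_sq_le.
Qed.
Lemma norm2_nonneg n x : 0 <= norm2 n x.
Proof. apply sqrt_pos. Qed.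

Lemma Rabs_le_norm2 n x i : (i < n)%nat -> Rabs (x i) <= norm2 n x.
Proof.
  intros Hi. unfold norm2. rewrite <- sqrt_Rsqr_abs. apply sqrt_le_1_alt. rewrite Rsqr_pow2.
  induction n as [|n IH]; [lia|]. rewrite fsum_S.
  destruct (Nat.eq_dec i n) as [->|Hne].
  - pose proof (fsum_sq_nonneg n x). lra.
  - assert (x i ^ 2 <= fsum n (fun i => x i ^ 2)) by (apply IH; lia). nra.
Qed.

Lemma norm2_le_abs n x y :
  (forall i, (i < n)%nat -> Rabs (y i) <= Rabs (x i)) -> norm2 n y <= norm2 n x.
Proof.
  intros H. apply sqrt_le_1_alt, fsum_le. intros i Hi.
  specialize (H i Hi). pose proof (Rabs_pos (y i)).
  rewrite <- (pow2_abs (y i)), <- (pow2_abs (x i)). nra.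
Qed.

Lemma norm2_le_of_sq n x b : 0 <= b -> fsum n (fun i => x i ^ 2) <= b ^ 2 -> norm2 n x <= b.
Proof. intros Hb H. rewrite <- (sqrt_pow2 b Hb). apply sqrt_le_1_alt, H. Qed.

Lemma fsum_abs_le_norm2 n s : fsum n (fun r => Rabs (s r)) <= sqrt (INR n) * norm2 n s.
Proof.
  rewrite Rmult_comm.
  rewrite (fsum_ext n _ (fun r => Rabs (s r) * 1)) by (intros; ring).
  eapply Rle_trans; [apply fsum_mul_le|]. right. unfold norm2. f_equal; f_equal.
  - apply fsum_ext. intros. apply pow2_abs.
  - rewrite fsum_const. ring.
Qed.

Section Frobenius.
Variables n1 n2 : nat.

Lemma frob_ext A B :
  (forall i j, (i < n1)%nat -> (j < n2)%nat -> A i j = B i j) -> frob n1 n2 A = frob n1 n2 B.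
Proof.
  intros H. unfold frob. f_equal. apply fsum_ext. intros. apply fsum_ext. intros. rewrite H; auto.
Qed.

Lemma frob_nonneg A : 0 <= frob n1 n2 A.
Proof. apply sqrt_pos. Qed.

Lemma frob_sq A : frob n1 n2 A ^ 2 = fsum n1 (fun i => fsum n2 (fun j => A i j ^ 2)).
Proof. apply pow2_sqrt, fsum_nonneg. intros. apply fsum_sq_nonneg. Qed.

Lemma fsum_mul_le_frob A B :
  fsum n1 (fun i => fsum n2 (fun j => A i j * B i j)) <= frob n1 n2 A * frob n1 n2 B.
Proof.
  eapply Rle_trans; [apply fsum_le; intros; apply fsum_mul_le|].
  eapply Rle_trans; [apply fsum_mul_le|]. right. unfold frob.
  f_equal; f_equal; apply fsum_ext; intros; apply pow2_sqrt, fsum_sq_nonneg.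
Qed.

Lemma frob_add_le A B :
  frob n1 n2 (fun i j => A i j + B i j) <= frob n1 n2 A + frob n1 n2 B.
Proof.
  pose proof (frob_nonneg A). pose proof (frob_nonneg B).
  apply Rsqr_incr_0_var; [|lra]. rewrite !Rsqr_pow2, !frob_sq.
  replace (fsum n1 (fun i => fsum n2 (fun j => (A i j + B i j) ^ 2))) with
    (fsum n1 (fun i => fsum n2 (fun j => A i j ^ 2))
     + 2 * fsum n1 (fun i => fsum n2 (fun j => A i j * B i j))
     + fsum n1 (fun i => fsum n2 (fun j => B i j ^ 2))).
  - rewrite <- (frob_sq A), <- (frob_sq B). pose proof (fsum_mul_le_frob A B). nra.
  - rewrite <- fsum_scal, <- !fsum_add. apply fsum_ext. intros.
    rewrite <- fsum_scal, <- !fsum_add. apply fsum_ext. intros. ring.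
Qed.

Lemma frob_fsum_le K (E : nat -> nat -> nat -> R) :
  frob n1 n2 (fun i j => fsum K (fun r => E r i j)) <= fsum K (fun r => frob n1 n2 (E r)).
Proof.
  induction K as [|K IH].
  - right. unfold frob. simpl.
    rewrite (fsum_ext n1 _ (fun _ => 0)), fsum_const, Rmult_0_r; [apply sqrt_0|].
    intros. rewrite (fsum_ext n2 _ (fun _ => 0)), fsum_const by (intros; ring). ring.
  - rewrite fsum_S. eapply Rle_trans; [|apply Rplus_le_compat_r, IH].
    apply (frob_add_le (fun i j => fsum K (fun r => E r i j)) (E K)).
Qed.

Lemma frob_rank1 c a b :
  frob n1 n2 (fun i j => c * a i * b j) = Rabs c * norm2 n1 a * norm2 n2 b.
Proof.
  unfold frob, norm2.
  replace (fsum n1 (fun i => fsum n2 (fun j => (c * a i * b j) ^ 2))) with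
    (c ^ 2 * fsum n1 (fun i => a i ^ 2) * fsum n2 (fun j => b j ^ 2)).
  - pose proof (fsum_sq_nonneg n1 a).
    rewrite !sqrt_mult_alt by nra. rewrite <- (pow2_abs c), sqrt_pow2 by apply Rabs_pos. auto.
  - transitivity (fsum n1 (fun i => (c ^ 2 * fsum n2 (fun j => b j ^ 2)) * a i ^ 2)).
    + rewrite fsum_scal. ring.
    + apply fsum_ext. intros. rewrite <- fsum_scal, Rmult_comm, <- fsum_scal.
      apply fsum_ext. intros. ring.
Qed.

(* Telescoped through [s' u v^T] and [s' u' v^T]. *)
Lemma frob_rank1_sub_le s s' (u u' v v' : nat -> R) hs e1 e2 :
  Rabs (s - s') <= hs -> Rabs s' <= Rabs s ->
  norm2 n1 u = 1 -> norm2 n2 v = 1 -> norm2 n1 u' <= 1 ->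
  norm2 n1 (fun i => u i - u' i) <= e1 -> norm2 n2 (fun j => v j - v' j) <= e2 ->
  frob n1 n2 (fun i j => s * u i * v j - s' * u' i * v' j) <= hs + Rabs s * (e1 + e2).
Proof.
  intros Hs Hs' Hu Hv Hu' He1 He2.
  rewrite (frob_ext _ (fun i j => ((s - s') * u i * v j + s' * (u i - u' i) * v j)
                                  + s' * u' i * (v j - v' j))) by (intros; ring).
  eapply Rle_trans; [apply frob_add_le|].
  eapply Rle_trans; [apply Rplus_le_compat_r,
    (frob_add_le (fun i j => (s - s') * u i * v j) (fun i j => s' * (u i - u' i) * v j))|].
  rewrite !frob_rank1, Hu, Hv.
  pose proof (Rabs_pos s'). pose proof (norm2_nonneg n1 u').
  pose proof (norm2_nonneg n1 (fun i => u i - u' i)). pose proof (norm2_nonneg n2 (fun j => v j - v' j)).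
  assert (Rabs s' * norm2 n1 (fun i => u i - u' i) <= Rabs s * e1)
    by (apply Rmult_le_compat; auto).
  assert (Rabs s' * norm2 n1 u' * norm2 n2 (fun j => v j - v' j) <= Rabs s * 1 * e2)
    by (apply Rmult_le_compat; try nra; apply Rmult_le_compat; auto).
  nra.
Qed.

End Frobenius.

(* Rounding toward zero onto the grid [h Z]. *)
Definition level (h x : R) : Z :=
  if Rle_dec 0 x then Int_part (x / h) else (- Int_part (- x / h))%Z.
Definition round0 (h x : R) : R := IZR (level h x) * h.

Lemma Int_part_nonneg_bounds y :
  0 <= y -> (0 <= Int_part y)%Z /\ IZR (Int_part y) <= y < IZR (Int_part y) + 1.
Proof.
  intros Hy. destruct (base_Int_part y) as [H1 H2]. split; [|lra].
  assert (-1 < Int_part y)%Z by (apply lt_IZR; lra). lia.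
Qed.

Lemma floor_grid_bounds h y : 0 < h -> 0 <= y ->
  let q := IZR (Int_part (y / h)) in (q = 0 \/ 1 <= q) /\ q * h <= y < (q + 1) * h.
Proof.
  intros Hh Hy q.
  destruct (Int_part_nonneg_bounds (y / h)) as [Hz [H1 H2]];
    [apply Rdiv_le_0_compat; lra|].
  unfold q. split.
  - destruct (Z.eq_dec (Int_part (y / h)) 0) as [->|Hne]; [left; auto|].
    right. apply IZR_le. lia.
  - split; [apply Rmult_le_reg_r with (/ h)|apply Rmult_lt_reg_r with (/ h)];
      try (apply Rinv_0_lt_compat; lra); field_simplify; lra.
Qed.

Lemma round0_spec h x : 0 < h ->
  Rabs (round0 h x) <= Rabs x /\ Rabs (x - round0 h x) <= h /\ (round0 h x <> 0 -> h <= Rabs x).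
Proof.
  intros Hh. unfold round0, level. destruct (Rle_dec 0 x) as [Hx|Hx].
  - destruct (floor_grid_bounds h x Hh Hx) as [Hq [H1 H2]].
    set (q := IZR (Int_part (x / h))) in *. assert (0 <= q) by (destruct Hq; lra).
    rewrite !Rabs_pos_eq by nra. split; [lra|]. split; [lra|].
    intros Hne. destruct Hq as [E|Hq]; [exfalso; apply Hne; rewrite E; ring|nra].
  - destruct (floor_grid_bounds h (- x) Hh ltac:(lra)) as [Hq [H1 H2]].
    set (q := IZR (Int_part (- x / h))) in *. assert (0 <= q) by (destruct Hq; lra).
    rewrite opp_IZR. fold q.
    rewrite (Rabs_left x), (Rabs_left1 (- q * h)), (Rabs_left1 (x - - q * h)) by nra.
    split; [lra|]. split; [lra|].
    intros Hne. destruct Hq as [E|Hq]; [exfalso; apply Hne; rewrite E; ring|nra].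
Qed.

Section Round0.
Variable h : R.
Hypothesis h_pos : 0 < h.

Lemma round0_abs_le x : Rabs (round0 h x) <= Rabs x.
Proof. apply (round0_spec h x h_pos). Qed.

Lemma round0_err x : Rabs (x - round0 h x) <= h.
Proof. apply (round0_spec h x h_pos). Qed.

Lemma round0_neq0 x : round0 h x <> 0 -> h <= Rabs x.
Proof. apply (round0_spec h x h_pos). Qed.

Lemma round0_0 : round0 h 0 = 0.
Proof.
  destruct (Req_dec (round0 h 0) 0) as [E|E]; auto.
  apply round0_neq0 in E. rewrite Rabs_R0 in E. lra.
Qed.

Lemma round0_err_sq x : (x - round0 h x) ^ 2 <= h ^ 2.
Proof.
  pose proof (round0_err x). pose proof (Rabs_pos (x - round0 h x)).
  rewrite <- pow2_abs. nra.
Qed.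

(* Below the grid step the error is [x] itself, above it the error is at most [h]. *)
Lemma round0_err_sq_le_abs x : (x - round0 h x) ^ 2 <= h * Rabs x.
Proof.
  destruct (Req_dec (round0 h x) 0) as [E|E].
  - pose proof (round0_err x) as Herr. rewrite E, Rminus_0_r in *.
    rewrite <- pow2_abs. pose proof (Rabs_pos x). nra.
  - apply round0_neq0 in E. pose proof (round0_err_sq x). nra.
Qed.

Lemma level_abs_le x : Rabs (IZR (level h x)) * h <= Rabs x.
Proof.
  pose proof (round0_abs_le x) as H. unfold round0 in H.
  rewrite Rabs_mult, (Rabs_pos_eq h) in H; lra.
Qed.

End Round0.

Fixpoint words {A : Type} (k : nat) (l : list A) : list (list A) :=
  match k with
  | O => [[]]
  | S k => map (fun p => fst p :: snd p) (list_prod l (words k l))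
  end.

Lemma length_words {A} k (l : list A) : length (words k l) = (length l ^ k)%nat.
Proof. induction k as [|k IH]; simpl; auto. rewrite length_map, length_prod, IH. auto. Qed.

Lemma in_words {A} k (l : list A) c :
  length c = k -> (forall x, In x c -> In x l) -> In c (words k l).
Proof.
  revert c. induction k as [|k IH]; intros [|a c] Hl Hin; simpl in *; try lia; auto.
  apply in_map_iff. exists (a, c). split; auto. apply in_prod; auto.
Qed.

Lemma in_words_nth {A} (d : A) k l c :
  length c = k -> (forall r, (r < k)%nat -> In (nth r c d) l) -> In c (words k l).
Proof.
  intros Hl H. apply in_words; auto. intros x Hx.
  apply In_nth with (d := d) in Hx as [r [Hr <-]]. apply H. lia.
Qed.

Lemma list_choice {A} (d : A) (Q : nat -> A -> Prop) K :
  (forall r, (r < K)%nat -> exists c, Q r c) ->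
  exists l, length l = K /\ forall r, (r < K)%nat -> Q r (nth r l d).
Proof.
  induction K as [|K IH]; intros H; [exists []; split; auto; intros; lia|].
  destruct IH as [l [Hl Hq]]; [intros; apply H; lia|].
  destruct (H K ltac:(lia)) as [c Hc]. exists (l ++ [c]).
  split; [rewrite length_app; simpl; lia|].
  intros r Hr. destruct (Nat.eq_dec r K) as [->|Hne].
  - rewrite app_nth2, Hl, Nat.sub_diag by lia. auto.
  - rewrite app_nth1 by lia. apply Hq. lia.
Qed.

(* A code letter [(i, l)] stands for the entry [(l - M) h] at index [i]. *)
Definition alphabet (n M : nat) : list (nat * nat) := list_prod (seq 0 n) (seq 0 (2 * M + 1)).

Lemma length_alphabet n M : length (alphabet n M) = (n * (2 * M + 1))%nat.
Proof. unfold alphabet. rewrite length_prod, !length_seq. auto. Qed.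

Definition decode (h : R) (M : nat) (c : list (nat * nat)) (i : nat) : R :=
  fold_right (fun p acc => (if Nat.eqb (fst p) i then (INR (snd p) - INR M) * h else 0) + acc) 0 c.

Definition encode (h : R) (M : nat) (x : nat -> R) (i : nat) : nat * nat :=
  (i, Z.to_nat (level h (x i) + Z.of_nat M)).

Lemma decode_app h M c1 c2 i : decode h M (c1 ++ c2) i = decode h M c1 i + decode h M c2 i.
Proof. induction c1 as [|p c1 IH]; simpl; [lra|]. unfold decode in *. simpl. rewrite IH. lra. Qed.

Lemma decode_pad h M m i : decode h M (repeat (0%nat, M) m) i = 0.
Proof. induction m as [|m IH]; simpl; auto. unfold decode in *; simpl. rewrite IH. destruct i; ring. Qed.

Lemma decode_encode h M x S i : NoDup S ->
  (forall j, In j S -> (- Z.of_nat M <= level h (x j))%Z) ->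
  decode h M (map (encode h M x) S) i = if in_dec Nat.eq_dec i S then round0 h (x i) else 0.
Proof.
  induction S as [|a S IH]; intros Hnd Hl; simpl; auto.
  inversion Hnd; subst. unfold decode in *. simpl.
  rewrite IH by (auto; intros; apply Hl; simpl; auto).
  destruct (Nat.eqb_spec a i) as [<-|Hne].
  - destruct (in_dec Nat.eq_dec a S); [contradiction|].
    destruct (Nat.eq_dec a a); [|contradiction]. simpl. unfold round0.
    specialize (Hl a (or_introl eq_refl)).
    rewrite INR_IZR_INZ, Z2Nat.id, plus_IZR, <- INR_IZR_INZ by lia. ring.
  - destruct (in_dec Nat.eq_dec i S), (Nat.eq_dec a i); try contradiction; simpl; lra.
Qed.

(* The bound [|x i| <= h M] on [S] keeps the rounding levels in [-M, M]. *)
Definition coded_support (n k : nat) (h : R) (M : nat) (x : nat -> R) : Prop :=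
  exists S, NoDup S /\ (forall i, In i S -> (i < n)%nat) /\ (length S <= k)%nat /\
    (forall i, (i < n)%nat -> round0 h (x i) <> 0 -> In i S) /\
    (forall i, In i S -> Rabs (x i) <= h * INR M).

Lemma coded_support_full n h M x :
  (forall i, (i < n)%nat -> Rabs (x i) <= h * INR M) -> coded_support n n h M x.
Proof.
  intros H. exists (seq 0 n). repeat split.
  - apply seq_NoDup.
  - intros i Hi. apply in_seq in Hi. lia.
  - rewrite length_seq. auto.
  - intros i Hi _. apply in_seq. lia.
  - intros i Hi. apply in_seq in Hi. apply H. lia.
Qed.

Lemma coded_support_word n k M h x : (0 < n)%nat -> 0 < h ->
  coded_support n k h M x ->
  exists c, In c (words k (alphabet n M)) /\
    forall i, (i < n)%nat -> decode h M c i = round0 h (x i).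
Proof.
  intros Hn Hh [S [Hnd [HSn [Hlen [Hsupp Hb]]]]].
  assert (Hlev : forall j, In j S -> (- Z.of_nat M <= level h (x j) <= Z.of_nat M)%Z).
  { intros j Hj. pose proof (level_abs_le h Hh (x j)). specialize (Hb j Hj).
    assert (Rabs (IZR (level h (x j))) <= INR M) by (apply Rmult_le_reg_r with h; lra).
    rewrite INR_IZR_INZ in *. pose proof (Rle_abs (IZR (level h (x j)))).
    pose proof (Rle_abs (- IZR (level h (x j)))). rewrite Rabs_Ropp in *.
    split; apply le_IZR; rewrite ?opp_IZR; lra. }
  exists (map (encode h M x) S ++ repeat (0%nat, M) (k - length S)). split.
  - apply in_words; [rewrite length_app, length_map, repeat_length; lia|].
    intros p [Hp|Hp]%in_app_or.
    + apply in_map_iff in Hp as [j [<- Hj]]. specialize (HSn j Hj). specialize (Hlev j Hj).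
      apply in_prod; apply in_seq; lia.
    + apply repeat_spec in Hp as ->. apply in_prod; apply in_seq; lia.
  - intros i Hi. rewrite decode_app, decode_pad, Rplus_0_r, decode_encode
      by (auto; intros; apply Hlev; auto).
    destruct (in_dec Nat.eq_dec i S) as [|Hn']; auto.
    destruct (Req_dec (round0 h (x i)) 0) as [E|E]; auto. exfalso. apply Hn', Hsupp; auto.
Qed.

Definition quantizable (n k : nat) (h : R) (M : nat) (eta : R) (x : nat -> R) : Prop :=
  coded_support n k h M x /\ norm2 n (fun i => x i - round0 h (x i)) <= eta.

Lemma quantizable_weaken n k h M eta eta' x :
  eta <= eta' -> quantizable n k h M eta x -> quantizable n k h M eta' x.
Proof. intros ? [? ?]. split; auto. lra. Qed.

Lemma unit_entry_le n x i : norm2 n x = 1 -> (i < n)%nat -> Rabs (x i) <= 1.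
Proof. intros H Hi. rewrite <- H. apply Rabs_le_norm2; auto. Qed.

Lemma quantizable_of_support n k M x S : (1 <= M)%nat -> norm2 n x = 1 ->
  NoDup S -> (forall i, In i S -> (i < n)%nat) -> (length S <= k)%nat ->
  (forall i, (i < n)%nat -> x i <> 0 -> In i S) ->
  quantizable n k (/ INR M) M (sqrt (INR k) / INR M) x.
Proof.
  intros HM Hx Hnd HSn Hlen Hsupp.
  assert (HMr : 1 <= INR M) by (apply (le_INR 1); auto).
  assert (Hh : 0 < / INR M) by (apply Rinv_0_lt_compat; lra).
  assert (Hround : forall i, (i < n)%nat -> round0 (/ INR M) (x i) <> 0 -> In i S).
  { intros i Hi Hr. apply Hsupp; auto. intros E. apply Hr. rewrite E. apply round0_0; auto. }
  split.
  - exists S. repeat split; auto.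
    intros i Hi. rewrite Rinv_l by lra. apply (unit_entry_le n); auto.
  - apply norm2_le_of_sq; [apply Rdiv_le_0_compat; [apply sqrt_pos|lra]|].
    set (p := fun i => if in_dec Nat.eq_dec i S then true else false).
    eapply Rle_trans; [apply (fsum_le_count p n _ ((/ INR M) ^ 2))|].
    + apply pow2_ge_0.
    + intros i Hi Hp. unfold p in Hp. destruct (in_dec Nat.eq_dec i S) as [|HnS]; [discriminate|].
      destruct (Req_dec (x i) 0) as [E|E]; [rewrite E, round0_0 by auto; ring|].
      exfalso. apply HnS, Hsupp; auto.
    + intros. apply round0_err_sq; auto.
    + assert (Hcount : (length (filter p (seq 0 n)) <= k)%nat).
      { eapply Nat.le_trans; [|exact Hlen]. apply NoDup_incl_length; [apply NoDup_filter, seq_NoDup|].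
        intros i [_ Hi]%filter_In. unfold p in Hi. destruct (in_dec Nat.eq_dec i S); auto; discriminate. }
      apply le_INR in Hcount. unfold Rdiv. rewrite Rpow_mult_distr, pow2_sqrt by apply pos_INR.
      apply Rmult_le_compat_r; [apply pow2_ge_0|auto].
Qed.

Lemma sparse_quantizable n s M x : (1 <= M)%nat -> supp_le n s x -> norm2 n x = 1 ->
  quantizable n s (/ INR M) M (sqrt (INR s) / INR M) x.
Proof.
  intros HM [S [Hnd [Hlen Hsupp]]] Hx.
  apply (quantizable_of_support n s M x (filter (fun i => Nat.ltb i n) S)); auto.
  - apply NoDup_filter; auto.
  - intros i [_ Hi]%filter_In. apply Nat.ltb_lt; auto.
  - eapply Nat.le_trans; [apply filter_length_le|auto].
  - intros i Hi Hxi. apply filter_In. split; [apply Hsupp; auto|apply Nat.ltb_lt; auto].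
Qed.

Lemma unit_quantizable n M x : (1 <= M)%nat -> norm2 n x = 1 ->
  quantizable n n (/ INR M) M (sqrt (INR n) / INR M) x.
Proof.
  intros HM Hx. apply (quantizable_of_support n n M x (seq 0 n)); auto.
  - apply seq_NoDup.
  - intros i Hi. apply in_seq in Hi. lia.
  - rewrite length_seq. auto.
  - intros. apply in_seq. lia.
Qed.

(* For [x] in [K_{n,s}], at most [sqrt s / h] entries reach the grid step [h] (an l1 count),
   and the squared error is at most [h |x|_1 <= h sqrt s]. *)
Lemma Kset_quantizable n s k M h x : Kset n s x -> norm2 n x = 1 -> 0 < h ->
  sqrt (INR s) <= h * INR k -> 1 <= h * INR M ->
  quantizable n k h M (sqrt (h * sqrt (INR s))) x.
Proof.
  intros [_ Hl1] Hx Hh Hk HM. unfold norm1 in Hl1.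
  set (p := fun i => if Req_EM_T (round0 h (x i)) 0 then false else true).
  split.
  - exists (filter p (seq 0 n)). repeat split.
    + apply NoDup_filter, seq_NoDup.
    + intros i [Hi _]%filter_In. apply in_seq in Hi. lia.
    + assert (INR (length (filter p (seq 0 n))) * h <= fsum n (fun i => Rabs (x i))).
      { apply count_le_fsum; [|intros; apply Rabs_pos].
        intros i Hi Hp. unfold p in Hp.
        destruct (Req_EM_T (round0 h (x i)) 0) as [|E]; [discriminate|]. apply round0_neq0; auto. }
      apply INR_le. apply Rmult_le_reg_r with h; lra.
    + intros i Hi Hr. apply filter_In. split; [apply in_seq; lia|].
      unfold p. destruct (Req_EM_T (round0 h (x i)) 0); auto.
    + intros i [Hi _]%filter_In. apply in_seq in Hi.
      apply Rle_trans with 1; auto. apply (unit_entry_le n); auto; lia.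
  - apply sqrt_le_1_alt.
    apply Rle_trans with (fsum n (fun i => h * Rabs (x i))).
    + apply fsum_le. intros. apply round0_err_sq_le_abs; auto.
    + rewrite fsum_scal. apply Rmult_le_compat_l; lra.
Qed.

(* [Sset] and [KRset] are instances of it, up to conversion. *)
Definition rank_set (n1 n2 Rk : nat) (G : R) (P1 P2 : (nat -> R) -> Prop)
  (Z : nat -> nat -> R) : Prop :=
  exists (sigma : nat -> R) (u v : nat -> nat -> R),
    Z = rank_sum Rk sigma u v /\
    (forall r, (r < Rk)%nat ->
       P1 (u r) /\ P2 (v r) /\ norm2 n1 (u r) = 1 /\ norm2 n2 (v r) = 1) /\
    norm2 Rk sigma <= G.

Lemma frob_rank_sum_round_le n1 n2 Rk G hs h1 h2 e1 e2 sigma (u v : nat -> nat -> R) :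
  0 < hs -> 0 < h1 -> 0 < h2 -> 0 <= e1 -> 0 <= e2 -> norm2 Rk sigma <= G ->
  (forall r, (r < Rk)%nat -> norm2 n1 (u r) = 1 /\ norm2 n2 (v r) = 1 /\
     norm2 n1 (fun i => u r i - round0 h1 (u r i)) <= e1 /\
     norm2 n2 (fun j => v r j - round0 h2 (v r j)) <= e2) ->
  frob n1 n2 (fun i j => rank_sum Rk sigma u v i j
    - rank_sum Rk (fun r => round0 hs (sigma r)) (fun r i => round0 h1 (u r i))
                  (fun r j => round0 h2 (v r j)) i j)
  <= INR Rk * hs + sqrt (INR Rk) * G * (e1 + e2).
Proof.
  intros Hhs Hh1 Hh2 He1 He2 HG Hf. unfold rank_sum.
  rewrite (frob_ext n1 n2 _ (fun i j => fsum Rk (fun r => sigma r * u r i * v r j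
    - round0 hs (sigma r) * round0 h1 (u r i) * round0 h2 (v r j))))
    by (intros; symmetry; apply fsum_sub).
  eapply Rle_trans; [apply frob_fsum_le|].
  eapply Rle_trans; [apply fsum_le; intros r Hr|].
  { destruct (Hf r Hr) as [Hu [Hv [F1 F2]]].
    apply (frob_rank1_sub_le n1 n2 _ _ _ _ _ _ hs e1 e2); auto.
    - apply round0_err; auto.
    - apply round0_abs_le; auto.
    - rewrite <- Hu. apply norm2_le_abs. intros. apply round0_abs_le; auto. }
  rewrite fsum_add, fsum_const.
  rewrite (fsum_ext _ _ (fun r => (e1 + e2) * Rabs (sigma r))), fsum_scal by (intros; ring).
  pose proof (fsum_abs_le_norm2 Rk sigma). pose proof (sqrt_pos (INR Rk)).
  assert (sqrt (INR Rk) * norm2 Rk sigma <= sqrt (INR Rk) * G) by (apply Rmult_le_compat_l; auto).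
  nra.
Qed.

Definition decode_matrix (Rk : nat) (hs : R) (Ms : nat) (h1 : R) (M1 : nat) (h2 : R) (M2 : nat)
  (c : list (nat * nat) * (list (list (nat * nat)) * list (list (nat * nat)))) : nat -> nat -> R :=
  rank_sum Rk (decode hs Ms (fst c)) (fun r => decode h1 M1 (nth r (fst (snd c)) []))
    (fun r => decode h2 M2 (nth r (snd (snd c)) [])).

Lemma words_choice n Rk k h M (x : nat -> nat -> R) : (0 < n)%nat -> 0 < h ->
  (forall r, (r < Rk)%nat -> coded_support n k h M (x r)) ->
  exists l, In l (words Rk (words k (alphabet n M))) /\
    forall r i, (r < Rk)%nat -> (i < n)%nat -> decode h M (nth r l []) i = round0 h (x r i).
Proof.
  intros Hn Hh Hx.
  destruct (list_choice [] (fun r c => In c (words k (alphabet n M)) /\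
      forall i, (i < n)%nat -> decode h M c i = round0 h (x r i)) Rk) as [l [Hl Hc]].
  { intros r Hr. apply coded_support_word; auto. }
  exists l. split; [apply in_words_nth with []; auto; apply Hc|].
  intros r i Hr Hi. apply Hc; auto.
Qed.

Lemma rank_set_covers n1 n2 Rk G Ms k1 M1 h1 e1 k2 M2 h2 e2 P1 P2 :
  (0 < n1)%nat -> (0 < n2)%nat -> (0 < Rk)%nat -> 0 < G -> (1 <= Ms)%nat ->
  0 < h1 -> 0 < h2 -> 0 <= e1 -> 0 <= e2 ->
  (forall x, P1 x -> norm2 n1 x = 1 -> quantizable n1 k1 h1 M1 e1 x) ->
  (forall y, P2 y -> norm2 n2 y = 1 -> quantizable n2 k2 h2 M2 e2 y) ->
  covers n1 n2 (rank_set n1 n2 Rk G P1 P2)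
    (INR Rk * (G / INR Ms) + sqrt (INR Rk) * G * (e1 + e2))
    ((Rk * (2 * Ms + 1)) ^ Rk * (((n1 * (2 * M1 + 1)) ^ k1) ^ Rk
                                 * ((n2 * (2 * M2 + 1)) ^ k2) ^ Rk))%nat.
Proof.
  intros Hn1 Hn2 HR HG HMs Hh1 Hh2 He1 He2 HP1 HP2.
  assert (HMsR : 1 <= INR Ms) by (apply (le_INR 1); auto).
  set (hs := G / INR Ms). assert (Hhs : 0 < hs) by (apply Rdiv_lt_0_compat; lra).
  set (Cs := words Rk (alphabet Rk Ms)).
  set (C1 := words Rk (words k1 (alphabet n1 M1))).
  set (C2 := words Rk (words k2 (alphabet n2 M2))).
  exists (map (decode_matrix Rk hs Ms h1 M1 h2 M2) (list_prod Cs (list_prod C1 C2))). split.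
  { unfold Cs, C1, C2. rewrite length_map, !length_prod, !length_words, !length_alphabet. auto. }
  intros Z [sigma [u [v [-> [Hf Hs]]]]].
  destruct (coded_support_word Rk Rk Ms hs sigma) as [cs [Hcs Ecs]]; auto.
  { apply coded_support_full. intros i Hi. unfold hs. replace (G / INR Ms * INR Ms) with G by (field; lra).
    eapply Rle_trans; [apply Rabs_le_norm2|]; eauto. }
  destruct (words_choice n1 Rk k1 h1 M1 u) as [lu [Hlu Elu]]; auto.
  { intros r Hr. destruct (Hf r Hr) as [? [_ [? _]]]. apply HP1; auto. }
  destruct (words_choice n2 Rk k2 h2 M2 v) as [lv [Hlv Elv]]; auto.
  { intros r Hr. destruct (Hf r Hr) as [_ [? [_ ?]]]. apply HP2; auto. }
  exists (decode_matrix Rk hs Ms h1 M1 h2 M2 (cs, (lu, lv))).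
  split; [apply in_map, in_prod, in_prod; auto|].
  eapply Rle_trans; [right; apply frob_ext|apply (frob_rank_sum_round_le n1 n2 Rk G hs h1 h2 e1 e2 sigma u v)];
    auto.
  - intros i j Hi Hj. unfold decode_matrix, rank_sum. simpl. f_equal. apply fsum_ext. intros r Hr.
    rewrite Ecs, Elu, Elv; auto.
  - intros r Hr. destruct (Hf r Hr) as [Hu [Hv [Hu1 Hv1]]].
    destruct (HP1 _ Hu Hu1) as [_ ?]. destruct (HP2 _ Hv Hv1) as [_ ?]. auto.
Qed.

Lemma covnum_spec n1 n2 M e : (exists k, covers n1 n2 M e k) ->
  covers n1 n2 M e (covnum n1 n2 M e) /\
  forall k', covers n1 n2 M e k' -> (covnum n1 n2 M e <= k')%nat.
Proof.
  intros H. unfold covnum. apply epsilon_spec.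
  destruct (dec_inh_nat_subset_has_unique_least_element _ (fun k => classic _) H)
    as [k [Hk _]].
  exists k. exact Hk.
Qed.

Lemma covnum_le n1 n2 M e k : covers n1 n2 M e k -> (covnum n1 n2 M e <= k)%nat.
Proof. intros H. apply (covnum_spec n1 n2 M e); eauto. Qed.

Lemma covers_mono n1 n2 M e e' k : e <= e' -> covers n1 n2 M e k -> covers n1 n2 M e' k.
Proof.
  intros He [c [Hl Hc]]. exists c. split; auto.
  intros Z HZ. destruct (Hc Z HZ) as [x [Hx Hd]]. exists x. split; auto. lra.
Qed.

Lemma covnum_antimono n1 n2 M e e' : (exists k, covers n1 n2 M e k) -> e <= e' ->
  (covnum n1 n2 M e' <= covnum n1 n2 M e)%nat.
Proof. intros H He. apply covnum_le, (covers_mono _ _ _ e); auto. apply covnum_spec; auto. Qed.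

(* A nonincreasing nat-valued [h] is a step function with finitely many steps on [a, b]:
   induction on [h a], splitting at the supremum of the first step. *)
Lemma ex_RInt_comp_nonincr_nat (F : nat -> R) N : forall (h : R -> nat) a b, a <= b ->
  (forall x y, a <= x -> x <= y -> y <= b -> (h y <= h x)%nat) -> (h a <= N)%nat ->
  ex_RInt (fun x => F (h x)) a b.
Proof.
  induction N as [|N IH]; intros h a b Hab Hm Ha.
  { apply ex_RInt_ext with (fun _ => F 0%nat); [|apply ex_RInt_const].
    intros x Hx. rewrite Rmin_left, Rmax_right in Hx by auto.
    assert (h x <= h a)%nat by (apply Hm; lra). f_equal. lia. }
  set (E := fun x => a <= x <= b /\ h x = h a).
  destruct (completeness E) as [c [Hub Hlub]].
  { exists b. intros x [Hx _]. lra. }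
  { exists a. split; auto. lra. }
  assert (Hac : a <= c) by (apply Hub; split; auto; lra).
  assert (Hcb : c <= b) by (apply Hlub; intros x [Hx _]; lra).
  apply ex_RInt_Chasles_0 with c; [lra| |].
  - apply ex_RInt_ext with (fun _ => F (h a)); [|apply ex_RInt_const].
    intros x Hx. rewrite Rmin_left, Rmax_right in Hx by auto.
    destruct (classic (exists y, E y /\ x < y)) as [[y [[Hy1 Hy2] Hxy]]|Hn].
    + assert (h y <= h x)%nat by (apply Hm; lra). assert (h x <= h a)%nat by (apply Hm; lra).
      f_equal. lia.
    + exfalso. assert (c <= x); [|lra].
      apply Hlub. intros y Hy. destruct (Rle_lt_dec y x); auto. exfalso. eauto.
  - set (h' := fun x => if Rle_dec x c then N else h x).
    apply ex_RInt_ext with (fun x => F (h' x)).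
    { intros x Hx. rewrite Rmin_left, Rmax_right in Hx by auto. unfold h'.
      destruct (Rle_dec x c); auto. lra. }
    assert (Hgt : forall y, c < y -> y <= b -> (h y <= N)%nat).
    { intros y Hy Hyb. assert (h y <= h a)%nat by (apply Hm; lra).
      assert (h y <> h a); [|lia]. intros Ee. assert (y <= c) by (apply Hub; split; auto; lra). lra. }
    apply IH; auto.
    + intros x y Hx Hxy Hy. unfold h'.
      destruct (Rle_dec y c), (Rle_dec x c); try lra; auto; [apply Hgt|apply Hm]; lra.
    + unfold h'. destruct (Rle_dec c c); lra || lia.
Qed.

(* Chaining: on each dyadic slice [E / 2^(k+1), E / 2^k] a nonincreasing [g] is at most
   its value at the left endpoint. *)
Lemma RInt_le_dyadic_sum (g : R -> R) E (bnd : nat -> R) : 0 < E ->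
  (forall x, 0 <= g x) ->
  (forall x y, 0 < x -> x <= y -> g y <= g x) ->
  (forall a b, 0 < a -> a <= b -> ex_RInt g a b) ->
  (forall k, g (E / 2 ^ S k) <= bnd k) ->
  forall K a, E / 2 ^ K <= a -> a <= E ->
  RInt g a E <= fsum K (fun k => bnd k * (E / 2 ^ S k)).
Proof.
  intros HE Hg0 Hgm Hint Hb K. induction K as [|K IH]; intros a H1 H2.
  { simpl in H1. replace a with E by lra. rewrite RInt_point. unfold zero. simpl. lra. }
  rewrite fsum_S. pose proof (pow_lt 2 K ltac:(lra)).
  assert (Hslice : E / 2 ^ S K = (E / 2 ^ K) / 2) by (simpl; field; lra).
  assert (Hp1 : 0 < E / 2 ^ S K) by (apply Rdiv_lt_0_compat; simpl; lra).
  assert (0 <= bnd K) by (eapply Rle_trans; [apply Hg0 | apply Hb]).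
  destruct (Rle_lt_dec (E / 2 ^ K) a) as [Ha|Ha].
  { specialize (IH a Ha H2). nra. }
  assert (HEK : E / 2 ^ K <= E).
  { apply Rmult_le_reg_r with (2 ^ K); auto. unfold Rdiv.
    rewrite Rmult_assoc, Rinv_l by lra. pose proof (pow_R1_Rle 2 K ltac:(lra)). nra. }
  rewrite <- (RInt_Chasles g a (E / 2 ^ K) E) by (apply Hint; lra).
  specialize (IH (E / 2 ^ K) (Rle_refl _) HEK).
  assert (Hslab : RInt g a (E / 2 ^ K) <= RInt (fun _ => bnd K) a (E / 2 ^ K)).
  { apply RInt_le; [lra|apply Hint; lra|apply ex_RInt_const|].
    intros x Hx. apply Rle_trans with (g (E / 2 ^ S K)); [apply Hgm; lra|apply Hb]. }
  rewrite RInt_const in Hslab. unfold scal in Hslab. simpl in Hslab. unfold mult in Hslab. simpl in Hslab.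
  change (plus (RInt g a (E / 2 ^ K)) (RInt g (E / 2 ^ K) E))
    with (RInt g a (E / 2 ^ K) + RInt g (E / 2 ^ K) E).
  assert ((E / 2 ^ K - a) * bnd K <= bnd K * (E / 2 ^ S K))
    by (rewrite Rmult_comm; apply Rmult_le_compat_l; lra).
  lra.
Qed.

Lemma exists_dyadic_le E d : 0 < d -> exists K : nat, E / 2 ^ K <= d.
Proof.
  intros Hd. destruct (INR_unbounded (E / d)) as [K HK]. exists K.
  pose proof (pow_lt 2 K ltac:(lra)).
  assert (INR K <= 2 ^ K).
  { clear. induction K as [|K IH]; [simpl; lra|]. rewrite S_INR. simpl.
    pose proof (pow_R1_Rle 2 K ltac:(lra)). lra. }
  apply Rmult_le_reg_r with (2 ^ K); auto. unfold Rdiv at 1. rewrite Rmult_assoc, Rinv_l by lra.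
  replace E with (E / d * d) by (field; lra). nra.
Qed.

(* Also covers [a = 0], where Stdlib's [ln] returns the junk value [ln 0 = 0]. *)
Lemma ln_INR_le a b : (a <= b)%nat -> ln (INR a) <= ln (INR b).
Proof.
  intros H. destruct a as [|a].
  - assert (Hln0 : ln 0 = 0).
    { unfold ln. destruct Rlt_dec as [r|r]; [exfalso; apply (Rlt_irrefl 0 r)|reflexivity]. }
    rewrite INR_0, Hln0. destruct b as [|b]; [rewrite INR_0, Hln0; lra|].
    rewrite <- ln_1. apply ln_le; [lra|]. apply (le_INR 1). lia.
  - apply ln_le; [apply (lt_INR 0); lia|apply le_INR; auto].
Qed.

Lemma entropy_integral_le n1 n2 P T m Cc (W : nat -> R) Bsum target :
  0 < T -> (1 <= m)%nat -> 0 <= Cc ->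
  (forall k, exists c, covers n1 n2 P (T / 2 ^ S k) c /\ ln (INR c) <= Cc * W k) ->
  (forall k, 0 <= W k) ->
  (forall K, fsum K (fun k => sqrt (W k) / 2 ^ S k) <= Bsum) ->
  T / sqrt (INR m) * sqrt Cc * Bsum <= target ->
  improper_int_le (fun eps => sqrt (ln (INR (covnum n1 n2 P (sqrt (INR m) * eps)))))
    (T / sqrt (INR m)) target.
Proof.
  intros HT Hm HCc Hlev HW Hsum Htarget.
  assert (Hsm : 0 < sqrt (INR m)) by (apply sqrt_lt_R0, (lt_INR 0); lia).
  set (E := T / sqrt (INR m)). assert (HE : 0 < E) by (apply Rdiv_lt_0_compat; auto).
  set (N := fun eps => covnum n1 n2 P (sqrt (INR m) * eps)).
  set (f := fun eps => sqrt (ln (INR (N eps)))).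
  assert (Hcov : forall rho, 0 < rho -> exists c, covers n1 n2 P rho c).
  { intros rho Hr. destruct (exists_dyadic_le T rho Hr) as [K HK].
    destruct (Hlev K) as [c [Hc _]]. exists c. apply covers_mono with (T / 2 ^ S K); auto.
    eapply Rle_trans; [|apply HK]. pose proof (pow_lt 2 K ltac:(lra)). simpl.
    apply Rmult_le_compat_l; [lra|]. apply Rinv_le_contravar; lra. }
  assert (HN : forall x y, 0 < x -> x <= y -> (N y <= N x)%nat).
  { intros x y Hx Hxy. apply covnum_antimono; [apply Hcov|]; nra. }
  assert (Hfm : forall x y, 0 < x -> x <= y -> f y <= f x)
    by (intros; apply sqrt_le_1_alt, ln_INR_le, HN; auto).
  assert (Hint : forall a b, 0 < a -> a <= b -> ex_RInt f a b).
  { intros a b Ha Hab. apply (ex_RInt_comp_nonincr_nat (fun k => sqrt (ln (INR k))) (N a)); auto.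
    intros x y Hx Hxy Hy. apply HN; lra. }
  assert (Hdyadic : forall k, f (E / 2 ^ S k) <= sqrt Cc * sqrt (W k)).
  { intros k. destruct (Hlev k) as [c [Hc Hlc]]. unfold f, N.
    replace (sqrt (INR m) * (E / 2 ^ S k)) with (T / 2 ^ S k)
      by (pose proof (pow_lt 2 (S k) ltac:(lra)); unfold E; field; lra).
    rewrite <- sqrt_mult_alt by auto. apply sqrt_le_1_alt.
    eapply Rle_trans; [|apply Hlc]. apply ln_INR_le, covnum_le; auto. }
  intros d [Hd1 Hd2].
  assert (Hpr : Riemann_integrable f d E) by (apply ex_RInt_Reals_0, Hint; lra).
  exists Hpr. rewrite <- RInt_Reals.
  destruct (exists_dyadic_le E d Hd1) as [K HK].
  eapply Rle_trans;
    [apply (RInt_le_dyadic_sum f E _ HE (fun _ => sqrt_pos _) Hfm Hint Hdyadic K d HK); lra|].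
  eapply Rle_trans; [|apply Htarget]. fold E.
  rewrite (fsum_ext _ _ (fun k => (E * sqrt Cc) * (sqrt (W k) / 2 ^ S k))), fsum_scal
    by (intros; unfold Rdiv; ring).
  apply Rmult_le_compat_l; auto. pose proof (sqrt_pos Cc). nra.
Qed.

Definition chain_weight (A : R) (k0 k : nat) : R :=
  if Nat.leb k k0 then 4 ^ k * (A + INR k0) else 4 ^ k0 * (A + INR k).

Lemma chain_weight_nonneg A k0 k : 0 <= A -> 0 <= chain_weight A k0 k.
Proof.
  intros. unfold chain_weight. pose proof (pos_INR k0). pose proof (pos_INR k).
  destruct (Nat.leb k k0); apply Rmult_le_pos; try (apply pow_le; lra); lra.
Qed.

Lemma chain_weight_0 A k : chain_weight A 0 k = A + INR k.
Proof.
  unfold chain_weight. destruct (Nat.leb_spec k 0); [replace k with 0%nat by lia|]; simpl; ring.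
Qed.

Lemma chain_weight_ge A k0 k : 0 <= A -> A + INR k <= chain_weight A k0 k.
Proof.
  intros HA. unfold chain_weight. pose proof (pos_INR k). destruct (Nat.leb_spec k k0).
  - apply le_INR in H0. pose proof (pow_R1_Rle 4 k ltac:(lra)). nra.
  - pose proof (pow_R1_Rle 4 k0 ltac:(lra)). nra.
Qed.

Lemma sqrt_mul_4pow k X : 0 <= X -> sqrt (4 ^ k * X) = 2 ^ k * sqrt X.
Proof.
  intros HX. rewrite sqrt_mult_alt by (apply pow_le; lra).
  replace (4 ^ k) with ((2 ^ k) ^ 2) by (rewrite <- pow_mult, Nat.mul_comm, pow_mult; f_equal; lra).
  rewrite sqrt_pow2; auto. apply pow_le. lra.
Qed.

(* The terms [sqrt (chain_weight A k0 k) / 2^(k+1)] are dominated by the decrements of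
   [(k0 + 1 - k) + (2 j + 4) / 2^j] with [j = k - k0] (truncated subtractions). *)
Definition tail_potential (j : nat) : R := (2 * INR j + 4) / 2 ^ j.
Definition chain_potential (k0 k : nat) : R := INR (k0 + 1 - k) + tail_potential (k - k0).

Lemma tail_potential_nonneg j : 0 <= tail_potential j.
Proof.
  apply Rdiv_le_0_compat; [pose proof (pos_INR j); lra|apply pow_lt; lra].
Qed.

Lemma tail_potential_decr j : tail_potential j - tail_potential (S j) = INR (j + 1) / 2 ^ j.
Proof. unfold tail_potential. rewrite S_INR, plus_INR. simpl. field. apply pow_nonzero. lra. Qed.

Lemma chain_term_le A k0 k : 1 <= A ->
  sqrt (chain_weight A k0 k) / 2 ^ S k
  <= / 2 * sqrt (A + INR k0) * (chain_potential k0 k - chain_potential k0 (S k)).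
Proof.
  intros HA. pose proof (pos_INR k0). pose proof (pos_INR k).
  set (c := / 2 * sqrt (A + INR k0)).
  unfold chain_weight, chain_potential. destruct (Nat.leb_spec k k0).
  - rewrite sqrt_mul_4pow by lra.
    replace (2 ^ k * sqrt (A + INR k0) / 2 ^ S k) with c by (unfold c; simpl; field; apply pow_nonzero; lra).
    replace (k - k0)%nat with 0%nat by lia.
    replace (k0 + 1 - k)%nat with (S (k0 + 1 - S k)) by lia. rewrite S_INR.
    assert (tail_potential (S k - k0) <= tail_potential 0).
    { destruct (Nat.eq_dec k k0) as [->|].
      - replace (S k0 - k0)%nat with 1%nat by lia. unfold tail_potential. simpl. lra.
      - replace (S k - k0)%nat with 0%nat by lia. lra. }
    assert (0 <= c) by (unfold c; pose proof (sqrt_pos (A + INR k0)); lra). nra.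
  - rewrite sqrt_mul_4pow by lra.
    replace (k0 + 1 - k)%nat with 0%nat by lia. replace (k0 + 1 - S k)%nat with 0%nat by lia.
    replace (S k - k0)%nat with (S (k - k0)) by lia.
    set (j := (k - k0)%nat). replace k with (k0 + j)%nat by (unfold j; lia).
    replace (k0 + j - k0)%nat with j by lia.
    replace (INR 0 + tail_potential j - (INR 0 + tail_potential (S j)))
      with (tail_potential j - tail_potential (S j)) by ring.
    rewrite tail_potential_decr.
    assert (Hs : sqrt (A + INR (k0 + j)) <= sqrt (A + INR k0) * INR (j + 1)).
    { rewrite !plus_INR. simpl. pose proof (pos_INR j).
      rewrite <- (sqrt_pow2 (INR j + 1)), <- sqrt_mult_alt by lra. apply sqrt_le_1_alt. nra. }
    pose proof (pow_lt 2 k0 ltac:(lra)). pose proof (pow_lt 2 j ltac:(lra)).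
    replace (2 ^ k0 * sqrt (A + INR (k0 + j)) / 2 ^ S (k0 + j))
      with (/ 2 * sqrt (A + INR (k0 + j)) / 2 ^ j)
      by (replace (2 ^ S (k0 + j)) with (2 * (2 ^ k0 * 2 ^ j)) by (rewrite <- pow_add; reflexivity);
          field; lra).
    unfold c, Rdiv.
    apply Rle_trans with (/ 2 * (sqrt (A + INR k0) * INR (j + 1)) * / 2 ^ j); [|right; ring].
    apply Rmult_le_compat_r; [left; apply Rinv_0_lt_compat|]; lra.
Qed.

Lemma fsum_chain_term_le A k0 K : 1 <= A ->
  fsum K (fun k => sqrt (chain_weight A k0 k) / 2 ^ S k) <= / 2 * sqrt (A + INR k0) * INR (k0 + 5).
Proof.
  intros HA. assert (Hc : 0 <= / 2 * sqrt (A + INR k0)) by (pose proof (sqrt_pos (A + INR k0)); lra).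
  eapply Rle_trans; [apply fsum_telescope; intros k; apply (chain_term_le A k0 k HA)|].
  apply Rmult_le_compat_l; auto. unfold chain_potential.
  pose proof (pos_INR (k0 + 1 - K)). pose proof (tail_potential_nonneg (K - k0)).
  replace (k0 + 1 - 0)%nat with (k0 + 1)%nat by lia. replace (0 - k0)%nat with 0%nat by lia.
  unfold tail_potential at 1. rewrite !plus_INR. simpl. lra.
Qed.

Lemma INR_pos_of_lt a : (0 < a)%nat -> 0 < INR a.
Proof. intros. apply (lt_INR 0). auto. Qed.

Lemma ln_INR_mul a b : (0 < a)%nat -> (0 < b)%nat -> ln (INR (a * b)) = ln (INR a) + ln (INR b).
Proof. intros. rewrite mult_INR. apply ln_mult; apply INR_pos_of_lt; auto. Qed.

Lemma ln_INR_pow a e : (0 < a)%nat -> ln (INR (a ^ e)) = INR e * ln (INR a).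
Proof. intros. rewrite pow_INR. apply ln_pow, INR_pos_of_lt. auto. Qed.

Lemma ln_INR_nonneg a : (0 < a)%nat -> 0 <= ln (INR a).
Proof. intros. rewrite <- ln_1. apply ln_le; [lra|]. apply (le_INR 1). lia. Qed.

Lemma INR_2pow k : INR (2 ^ k) = 2 ^ k.
Proof. rewrite pow_INR. replace (INR 2) with 2 by (simpl; lra). reflexivity. Qed.

Lemma INR_4pow k : INR (4 ^ k) = 4 ^ k.
Proof. rewrite pow_INR. replace (INR 4) with 4 by (simpl; lra). reflexivity. Qed.

Lemma ln2_lt_1 : ln 2 < 1.
Proof.
  rewrite <- ln_exp. apply ln_increasing; [lra|]. pose proof (exp_ineq1 1 ltac:(lra)). lra.
Qed.

Lemma ln_INR_le_dyadic x a e : (0 < x)%nat -> (0 < a)%nat -> (x <= a * 2 ^ e)%nat ->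
  ln (INR x) <= ln (INR a) + INR e.
Proof.
  intros Hx Ha Hle. eapply Rle_trans; [apply ln_le; [apply INR_pos_of_lt|apply le_INR]; eauto|].
  rewrite ln_INR_mul, ln_INR_pow by (try apply Nat.neq_0_lt_0, Nat.pow_nonzero; lia).
  simpl (INR 2). replace (1 + 1) with 2 by ring.
  pose proof ln2_lt_1. pose proof (pos_INR e). pose proof ln_lt_2. nra.
Qed.

Lemma sqrt_le_self x : 1 <= x -> sqrt x <= x.
Proof. intros. rewrite <- (sqrt_pow2 x) at 2 by lra. apply sqrt_le_1_alt. nra. Qed.

(* At dyadic level [k], the unit vectors of [P] are quantized to accuracy [1 / (3 2^(k+1))]
   by words of length [k1] over an alphabet whose log-size contributes at most [B]. *)
Definition level_quantizes (n : nat) (P : (nat -> R) -> Prop) (k : nat) (B : R) : Prop :=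
  exists k1 M1 h1, 0 < h1 /\ INR k1 * ln (INR (n * (2 * M1 + 1))) <= B /\
    forall x, P x -> norm2 n x = 1 -> quantizable n k1 h1 M1 (/ (3 * 2 ^ S k)) x.

(* Rank-one terms are [G / (3 Rk 2^(k+1))]-accurate in [sigma] and [1 / (3 2^(k+1))]-accurate
   in each factor, so the total error is at most [G sqrt Rk / 2^(k+1)]. *)
Lemma rank_set_level_cover n n1 n2 Rk G k P1 P2 B1 B2 :
  (0 < n1)%nat -> (0 < n2)%nat -> (1 <= Rk <= n)%nat -> 0 < G ->
  level_quantizes n1 P1 k B1 -> level_quantizes n2 P2 k B2 ->
  exists c, covers n1 n2 (rank_set n1 n2 Rk G P1 P2) (G * sqrt (INR Rk) / 2 ^ S k) c /\
    ln (INR c) <= INR Rk * (2 * ln (INR n) + INR k + 4) + INR Rk * B1 + INR Rk * B2.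
Proof.
  intros Hn1 Hn2 HR HG [k1 [M1 [h1 [Hh1 [HB1 HQ1]]]]] [k2 [M2 [h2 [Hh2 [HB2 HQ2]]]]].
  assert (Hp : (2 ^ S k <> 0)%nat) by (apply Nat.pow_nonzero; lia).
  pose proof (pow_lt 2 (S k) ltac:(lra)) as Hp'.
  assert (HRr : 1 <= INR Rk) by (apply (le_INR 1); lia).
  assert (Hsq : 1 <= sqrt (INR Rk)) by (rewrite <- sqrt_1; apply sqrt_le_1_alt; lra).
  assert (Heta : 0 <= / (3 * 2 ^ S k)) by (left; apply Rinv_0_lt_compat; lra).
  set (Ms := (3 * Rk * 2 ^ S k)%nat).
  assert (HMs : INR Ms = 3 * INR Rk * 2 ^ S k) by (unfold Ms; rewrite !mult_INR, INR_2pow; simpl; ring).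
  eexists. split.
  - eapply covers_mono; [|apply (rank_set_covers n1 n2 Rk G Ms k1 M1 h1 (/ (3 * 2 ^ S k)) k2 M2 h2); auto;
      [lia|unfold Ms; nia|lra]].
    rewrite HMs. replace (INR Rk * (G / (3 * INR Rk * 2 ^ S k))) with (G / (3 * 2 ^ S k))
      by (field; lra).
    replace (G * sqrt (INR Rk) / 2 ^ S k) with
      (sqrt (INR Rk) * G / (3 * 2 ^ S k) + sqrt (INR Rk) * G * (/ (3 * 2 ^ S k) + / (3 * 2 ^ S k)))
      by (field; lra).
    apply Rplus_le_compat_r. unfold Rdiv. apply Rmult_le_compat_r; [lra|nra].
  - assert (Hsize : ln (INR (Rk * (2 * Ms + 1))) <= 2 * ln (INR n) + INR k + 4).
    { rewrite ln_INR_mul by lia.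
      assert (Hgrid : ln (INR (2 * Ms + 1)) <= ln (INR Rk) + INR (k + 4)).
      { apply ln_INR_le_dyadic; try lia. unfold Ms. rewrite Nat.pow_succ_r', Nat.pow_add_r.
        assert (0 < 2 ^ k)%nat by (apply Nat.neq_0_lt_0, Nat.pow_nonzero; lia). simpl. nia. }
      pose proof (ln_INR_le Rk n ltac:(lia)). rewrite (plus_INR k 4) in Hgrid. simpl (INR 4) in Hgrid. lra. }
    assert (Hpos : forall a e, (0 < a)%nat -> (0 < a ^ e)%nat)
      by (intros; apply Nat.neq_0_lt_0, Nat.pow_nonzero; lia).
    rewrite !ln_INR_mul, !ln_INR_pow by (repeat apply Nat.mul_pos_pos; repeat apply Hpos; nia).
    pose proof (pos_INR Rk).
    assert (INR Rk * ln (INR (Rk * (2 * Ms + 1))) <= INR Rk * (2 * ln (INR n) + INR k + 4))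
      by (apply Rmult_le_compat_l; auto).
    assert (INR Rk * (INR k1 * ln (INR (n1 * (2 * M1 + 1)))) <= INR Rk * B1)
      by (apply Rmult_le_compat_l; auto).
    assert (INR Rk * (INR k2 * ln (INR (n2 * (2 * M2 + 1)))) <= INR Rk * B2)
      by (apply Rmult_le_compat_l; auto).
    lra.
Qed.

Lemma level_quantizes_weaken n P k B B' :
  B <= B' -> level_quantizes n P k B -> level_quantizes n P k B'.
Proof. intros HB [k1 [M1 [h1 [Hh [HB1 HQ]]]]]. exists k1, M1, h1. split; [|split]; auto. lra. Qed.

Lemma pow_pos_nat a e : (0 < a)%nat -> (0 < a ^ e)%nat.
Proof. intros. apply Nat.neq_0_lt_0, Nat.pow_nonzero. lia. Qed.

Lemma grid_level_quantizes n nm q k P : (0 < n)%nat -> (n <= nm)%nat -> (1 <= q <= nm)%nat ->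
  (forall M, (1 <= M)%nat -> forall x, P x -> norm2 n x = 1 ->
     quantizable n q (/ INR M) M (sqrt (INR q) / INR M) x) ->
  level_quantizes n P k (INR q * (2 * ln (INR nm) + INR k + 4)).
Proof.
  intros Hn Hnm Hq HP. set (M := (3 * q * 2 ^ S k)%nat).
  pose proof (pow_pos_nat 2 k ltac:(lia)) as Hp. pose proof (pow_lt 2 (S k) ltac:(lra)) as Hp'.
  assert (HM : (1 <= M)%nat) by (unfold M; rewrite Nat.pow_succ_r'; nia).
  assert (HMr : INR M = 3 * INR q * 2 ^ S k) by (unfold M; rewrite !mult_INR, INR_2pow; simpl; ring).
  assert (Hqr : 1 <= INR q) by (apply (le_INR 1); lia).
  exists q, M, (/ INR M). split; [apply Rinv_0_lt_compat, INR_pos_of_lt; lia|]. split.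
  - apply Rmult_le_compat_l; [lra|]. rewrite ln_INR_mul by lia.
    assert (Hgrid : ln (INR (2 * M + 1)) <= ln (INR q) + INR (k + 4)).
    { apply ln_INR_le_dyadic; try lia. unfold M. rewrite Nat.pow_succ_r', Nat.pow_add_r. simpl. nia. }
    pose proof (ln_INR_le n nm Hnm). pose proof (ln_INR_le q nm ltac:(lia)).
    rewrite (plus_INR k 4) in Hgrid. simpl (INR 4) in Hgrid. lra.
  - intros x Hx Hx1. apply quantizable_weaken with (sqrt (INR q) / INR M); [|apply HP; auto].
    rewrite HMr. apply Rle_trans with (INR q / (3 * INR q * 2 ^ S k)).
    + apply Rmult_le_compat_r; [left; apply Rinv_0_lt_compat; nra|apply sqrt_le_self; lra].
    + right. field. lra.
Qed.

Lemma sparse_level_quantizes n nm s k : (1 <= s <= n)%nat -> (n <= nm)%nat ->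
  level_quantizes n (supp_le n s) k (INR s * (2 * ln (INR nm) + INR k + 4)).
Proof.
  intros Hs Hn. apply grid_level_quantizes; try lia.
  intros M HM x Hx Hx1. apply sparse_quantizable; auto.
Qed.

(* Rounding at step [h = 1 / (9 sqrt s 4^(k+1))], which keeps [sqrt s / h = 9 s 4^(k+1)] entries. *)
Lemma Kset_level_quantizes_coarse n nm s k : (1 <= s <= n)%nat -> (n <= nm)%nat ->
  level_quantizes n (Kset n s) k (36 * INR s * 4 ^ k * (2 * ln (INR nm) + 2 * INR k + 7)).
Proof.
  intros Hs Hn. set (M := (9 * s * 4 ^ S k)%nat).
  set (h := / (9 * sqrt (INR s) * 4 ^ S k)).
  assert (Hsr : 1 <= INR s) by (apply (le_INR 1); lia).
  pose proof (sqrt_lt_R0 (INR s) ltac:(lra)) as Hsq.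
  pose proof (pow_lt 4 (S k) ltac:(lra)) as H4.
  assert (HMr : INR M = 9 * INR s * 4 ^ S k) by (unfold M; rewrite !mult_INR, INR_4pow; simpl; ring).
  assert (Hh : 0 < h) by (apply Rinv_0_lt_compat; nra).
  assert (HhM : h * INR M = sqrt (INR s)).
  { rewrite HMr. unfold h. rewrite <- (sqrt_sqrt (INR s)) at 2 by lra. field. lra. }
  exists M, M, h. split; [auto|]. split.
  - rewrite HMr, ln_INR_mul by lia.
    assert (Hgrid : ln (INR (2 * M + 1)) <= ln (INR s) + INR (2 * k + 7)).
    { apply ln_INR_le_dyadic; try lia. unfold M.
      replace (2 * k + 7)%nat with (2 * S k + 5)%nat by lia.
      rewrite Nat.pow_add_r, Nat.pow_mul_r. pose proof (pow_pos_nat 4 k ltac:(lia)). simpl. nia. }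
    rewrite (plus_INR (2 * k) 7), (mult_INR 2 k) in Hgrid. simpl (INR 2) in Hgrid. simpl (INR 7) in Hgrid.
    pose proof (ln_INR_le n nm Hn). pose proof (ln_INR_le s nm ltac:(lia)).
    pose proof (ln_INR_nonneg n ltac:(lia)). pose proof (ln_INR_nonneg (2 * M + 1) ltac:(lia)).
    pose proof (pow_lt 4 k ltac:(lra)).
    replace (4 ^ S k) with (4 * 4 ^ k) by reflexivity.
    replace (9 * INR s * (4 * 4 ^ k)) with (36 * INR s * 4 ^ k) by ring.
    apply Rmult_le_compat_l; [nra|lra].
  - intros x Hx Hx1. apply quantizable_weaken with (sqrt (h * sqrt (INR s))).
    + right. replace (h * sqrt (INR s)) with ((/ (3 * 2 ^ S k)) ^ 2).
      * apply sqrt_pow2. left. apply Rinv_0_lt_compat, Rmult_lt_0_compat; [lra|apply pow_lt; lra].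
      * unfold h. replace (4 ^ S k) with ((2 ^ S k) ^ 2)
          by (rewrite <- pow_mult, Nat.mul_comm, pow_mult; f_equal; lra).
        field. split; [apply pow_nonzero|]; lra.
    + assert (1 <= sqrt (INR s)) by (rewrite <- sqrt_1; apply sqrt_le_1_alt; lra).
      apply Kset_quantizable; auto; lra.
Qed.

(* Up to [k0 ~ log2 n] the coarse rounding is used, beyond it all [n] coordinates are rounded. *)
Lemma Kset_level_quantizes n nm s k k0 : (1 <= s <= n)%nat -> (n <= nm)%nat -> (nm < 2 ^ k0)%nat ->
  level_quantizes n (Kset n s) k (252 * INR s * chain_weight (ln (INR nm) + 1) k0 k).
Proof.
  intros Hs Hn Hk0. pose proof (ln_INR_nonneg nm ltac:(lia)) as HL.
  assert (Hsr : 1 <= INR s) by (apply (le_INR 1); lia).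
  pose proof (pos_INR k). pose proof (pos_INR k0).
  unfold chain_weight. destruct (Nat.leb_spec k k0) as [Hk|Hk].
  - eapply level_quantizes_weaken; [|apply (Kset_level_quantizes_coarse n nm); auto].
    apply le_INR in Hk. pose proof (pow_lt 4 k ltac:(lra)).
    replace (252 * INR s * (4 ^ k * (ln (INR nm) + 1 + INR k0)))
      with (36 * INR s * 4 ^ k * (7 * (ln (INR nm) + 1 + INR k0))) by ring.
    apply Rmult_le_compat_l; [nra|lra].
  - eapply level_quantizes_weaken; [|apply (grid_level_quantizes n nm n k); try lia].
    2: { intros M HM x _ Hx1. apply unit_quantizable; auto. }
    assert (INR n <= INR s * 4 ^ k0).
    { apply Rle_trans with (2 ^ k0).
      - rewrite <- INR_2pow. apply le_INR. lia.
      - apply Rle_trans with (4 ^ k0); [apply pow_incr; lra|].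
        pose proof (pow_lt 4 k0 ltac:(lra)). nra. }
    assert (0 <= 2 * ln (INR nm) + INR k + 4) by lra.
    apply Rle_trans with (INR s * 4 ^ k0 * (2 * ln (INR nm) + INR k + 4));
      [apply Rmult_le_compat_r; auto|].
    pose proof (pow_lt 4 k0 ltac:(lra)). assert (0 <= INR s * 4 ^ k0) by nra. nra.
Qed.

Lemma Sset_level_cover n1 n2 s1 s2 Rk G k :
  (1 <= s1 <= n1)%nat -> (1 <= s2 <= n2)%nat -> (1 <= Rk <= Nat.min n1 n2)%nat -> 0 < G ->
  exists c, covers n1 n2 (Sset n1 n2 s1 s2 Rk G) (G * sqrt (INR Rk) / 2 ^ S k) c /\
    ln (INR c) <= 8 * (INR Rk * INR (s1 + s2)) * chain_weight (ln (INR (Nat.max n1 n2)) + 1) 0 k.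
Proof.
  intros Hs1 Hs2 HR HG. set (nm := Nat.max n1 n2). set (X := 2 * ln (INR nm) + INR k + 4).
  change (Sset n1 n2 s1 s2 Rk G) with (rank_set n1 n2 Rk G (supp_le n1 s1) (supp_le n2 s2)).
  destruct (rank_set_level_cover nm n1 n2 Rk G k (supp_le n1 s1) (supp_le n2 s2) (INR s1 * X) (INR s2 * X))
    as [c [Hc Hl]]; try lia; auto; try (apply sparse_level_quantizes; lia).
  exists c. split; [exact Hc|]. eapply Rle_trans; [apply Hl|].
  rewrite chain_weight_0, plus_INR. fold X.
  pose proof (ln_INR_nonneg nm ltac:(lia)). pose proof (pos_INR k).
  assert (1 <= INR Rk) by (apply (le_INR 1); lia).
  assert (1 <= INR s1) by (apply (le_INR 1); lia). assert (1 <= INR s2) by (apply (le_INR 1); lia).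
  assert (0 <= X <= 4 * (ln (INR nm) + 1 + INR k)) by (unfold X; lra).
  replace (INR Rk * X + INR Rk * (INR s1 * X) + INR Rk * (INR s2 * X))
    with (INR Rk * (1 + INR s1 + INR s2) * X) by ring.
  replace (8 * (INR Rk * (INR s1 + INR s2)) * (ln (INR nm) + 1 + INR k))
    with (INR Rk * (2 * (INR s1 + INR s2)) * (4 * (ln (INR nm) + 1 + INR k))) by ring.
  apply Rmult_le_compat; nra.
Qed.

Lemma KRset_level_cover n1 n2 s1 s2 Rk G k :
  (1 <= s1 <= n1)%nat -> (1 <= s2 <= n2)%nat -> (1 <= Rk <= Nat.min n1 n2)%nat -> 0 < G ->
  exists c, covers n1 n2 (KRset n1 n2 s1 s2 Rk G) (G * sqrt (INR Rk) / 2 ^ S k) c /\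
    ln (INR c) <= 256 * (INR Rk * INR (s1 + s2))
                  * chain_weight (ln (INR (Nat.max n1 n2)) + 1) (S (Nat.log2 (Nat.max n1 n2))) k.
Proof.
  intros Hs1 Hs2 HR HG. set (nm := Nat.max n1 n2). set (k0 := S (Nat.log2 nm)).
  set (W := chain_weight (ln (INR nm) + 1) k0 k).
  assert (Hk0 : (nm < 2 ^ k0)%nat) by (apply Nat.log2_spec; lia).
  change (KRset n1 n2 s1 s2 Rk G) with (rank_set n1 n2 Rk G (Kset n1 s1) (Kset n2 s2)).
  destruct (rank_set_level_cover nm n1 n2 Rk G k (Kset n1 s1) (Kset n2 s2)
              (252 * INR s1 * W) (252 * INR s2 * W)) as [c [Hc Hl]];
    try lia; auto; try (apply Kset_level_quantizes; lia).
  exists c. split; [exact Hc|]. eapply Rle_trans; [apply Hl|].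
  pose proof (ln_INR_nonneg nm ltac:(lia)).
  pose proof (chain_weight_ge (ln (INR nm) + 1) k0 k ltac:(lra)) as HW. fold W in HW.
  rewrite plus_INR. assert (1 <= INR Rk) by (apply (le_INR 1); lia).
  assert (1 <= INR s1) by (apply (le_INR 1); lia). assert (1 <= INR s2) by (apply (le_INR 1); lia).
  pose proof (pos_INR k).
  assert (INR Rk * (2 * ln (INR nm) + INR k + 4) <= INR Rk * (4 * W))
    by (apply Rmult_le_compat_l; lra).
  assert (0 <= (INR s1 + INR s2 - 1) * (INR Rk * W))
    by (apply Rmult_le_pos; [|apply Rmult_le_pos]; lra).
  replace (256 * (INR Rk * (INR s1 + INR s2)) * W)
    with (4 * (INR Rk * W) + 252 * (INR s1 + INR s2) * (INR Rk * W)
          + 4 * ((INR s1 + INR s2 - 1) * (INR Rk * W))) by ring.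
  replace (INR Rk * (252 * INR s1 * W) + INR Rk * (252 * INR s2 * W))
    with (252 * (INR s1 + INR s2) * (INR Rk * W)) by ring.
  lra.
Qed.

Lemma le_sqrt_of_sq x y : 0 <= x -> x ^ 2 <= y -> x <= sqrt y.
Proof. intros Hx H. rewrite <- (sqrt_pow2 x Hx). apply sqrt_le_1_alt, H. Qed.

Lemma dudley_bound_le G R m s c B C Lam : 0 <= G -> 0 <= R -> 0 < m -> 0 <= s -> 0 <= c ->
  c * B ^ 2 <= C * Lam ->
  G * sqrt R / sqrt m * sqrt (c * (R * s)) * B <= sqrt (C * G ^ 2 * R ^ 2 * s * Lam / m).
Proof.
  intros HG HR Hm Hs Hc Hbound.
  assert (Hsm : 0 < sqrt m) by (apply sqrt_lt_R0; lra).
  pose proof (sqrt_pos R). pose proof (sqrt_pos (c * (R * s))).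
  assert (Hfac : 0 <= G * sqrt R / sqrt m * sqrt (c * (R * s)))
    by (apply Rmult_le_pos; [apply Rdiv_le_0_compat; nra|lra]).
  destruct (Rle_lt_dec 0 B) as [HB|HB].
  2: { pose proof (sqrt_pos (C * G ^ 2 * R ^ 2 * s * Lam / m)). nra. }
  apply le_sqrt_of_sq.
  - apply Rmult_le_pos; lra.
  - replace ((G * sqrt R / sqrt m * sqrt (c * (R * s)) * B) ^ 2)
      with (G ^ 2 * (sqrt R) ^ 2 * (sqrt (c * (R * s))) ^ 2 * B ^ 2 / (sqrt m) ^ 2) by (field; lra).
    assert (0 <= c * (R * s)) by (apply Rmult_le_pos; nra).
    rewrite (pow2_sqrt R), (pow2_sqrt m), (pow2_sqrt (c * (R * s))) by lra.
    replace (G ^ 2 * R * (c * (R * s)) * B ^ 2 / m) with (G ^ 2 * R ^ 2 * s / m * (c * B ^ 2))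
      by (field; lra).
    replace (C * G ^ 2 * R ^ 2 * s * Lam / m) with (G ^ 2 * R ^ 2 * s / m * (C * Lam)) by (field; lra).
    apply Rmult_le_compat_l; auto. apply Rdiv_le_0_compat; [|lra].
    apply Rmult_le_pos; [|auto]. nra.
Qed.

Lemma ln_max_ge_half n1 n2 : (2 <= n1)%nat -> / 2 <= ln (INR (Nat.max n1 n2)).
Proof.
  intros H. apply Rle_trans with (ln 2); [pose proof ln_lt_2; lra|].
  apply ln_le; [lra|]. replace 2 with (INR 2) by (simpl; lra). apply le_INR. lia.
Qed.

Lemma log2_succ_le_ln n : (2 <= n)%nat -> INR (S (Nat.log2 n)) <= 2 * ln (INR n) + 1.
Proof.
  intros H. destruct (Nat.log2_spec n ltac:(lia)) as [H1 _].
  pose proof (ln_INR_le _ _ H1) as Hln.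
  rewrite ln_INR_pow in Hln by lia. simpl (INR 2) in Hln. replace (1 + 1) with 2 in Hln by ring.
  pose proof ln_lt_2. pose proof (pos_INR (Nat.log2 n)). rewrite S_INR. nra.
Qed.

Theorem mainTheorem11 :
  exists CS CK : R, 0 < CS /\ 0 < CK /\
  forall (n1 n2 s1 s2 Rk m : nat) (Gamma : R),
    (2 <= n1)%nat -> (2 <= n2)%nat ->
    (1 <= s1 <= n1)%nat -> (1 <= s2 <= n2)%nat ->
    (1 <= Rk <= Nat.min n1 n2)%nat ->
    1 <= Gamma -> (1 <= m)%nat ->
    improper_int_le
      (fun eps => sqrt (ln (INR (covnum n1 n2 (Sset n1 n2 s1 s2 Rk Gamma)
                                           (sqrt (INR m) * eps)))))
      (Gamma * sqrt (INR Rk) / sqrt (INR m))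
      (sqrt (CS * Gamma^2 * (INR Rk)^2 * INR (s1 + s2)
               * ln (INR (Nat.max n1 n2)) / INR m))
    /\
    improper_int_le
      (fun eps => sqrt (ln (INR (covnum n1 n2 (KRset n1 n2 s1 s2 Rk Gamma)
                                           (sqrt (INR m) * eps)))))
      (Gamma * sqrt (INR Rk) / sqrt (INR m))
      (sqrt (CK * Gamma^2 * (INR Rk)^2 * INR (s1 + s2)
               * (ln (INR (Nat.max n1 n2)))^3 / INR m)).
Proof.
  exists 150, 100000. split; [lra|]. split; [lra|].
  intros n1 n2 s1 s2 Rk m G Hn1 Hn2 Hs1 Hs2 HR HG Hm.
  set (L := ln (INR (Nat.max n1 n2))). set (k0 := S (Nat.log2 (Nat.max n1 n2))).
  assert (HL : / 2 <= L) by (apply ln_max_ge_half; auto).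
  assert (Hk0 : INR k0 <= 2 * L + 1) by (apply log2_succ_le_ln; lia).
  assert (HRr : 1 <= INR Rk) by (apply (le_INR 1); lia).
  assert (Hmr : 1 <= INR m) by (apply (le_INR 1); lia).
  assert (Hsr : 2 <= INR (s1 + s2)) by (replace 2 with (INR 2) by (simpl; lra); apply le_INR; lia).
  assert (HT : 0 < G * sqrt (INR Rk)) by (apply Rmult_lt_0_compat; [|apply sqrt_lt_R0]; lra).
  pose proof (pos_INR k0).
  split.
  - apply (entropy_integral_le _ _ _ _ m (8 * (INR Rk * INR (s1 + s2))) (chain_weight (L + 1) 0)
             (/ 2 * sqrt (L + 1 + INR 0) * INR (0 + 5))); auto; try nra.
    + intros k. apply Sset_level_cover; auto; lra.
    + intros k. apply chain_weight_nonneg. lra.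
    + intros K. apply fsum_chain_term_le. lra.
    + apply dudley_bound_le; try lra.
      replace (INR (0 + 5)) with 5 by (simpl; lra). simpl (INR 0).
      rewrite !Rpow_mult_distr, pow2_sqrt by lra. lra.
  - apply (entropy_integral_le _ _ _ _ m (256 * (INR Rk * INR (s1 + s2))) (chain_weight (L + 1) k0)
             (/ 2 * sqrt (L + 1 + INR k0) * INR (k0 + 5))); auto; try nra.
    + intros k. apply KRset_level_cover; auto; lra.
    + intros k. apply chain_weight_nonneg. lra.
    + intros K. apply fsum_chain_term_le. lra.
    + apply dudley_bound_le; try lra.
      rewrite Rpow_mult_distr, Rpow_mult_distr, pow2_sqrt, plus_INR by lra. simpl (INR 5).
      assert ((INR k0 + (1 + 1 + 1 + 1 + 1)) ^ 2 <= (14 * L) ^ 2) by (apply pow_incr; lra).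
      assert ((L + 1 + INR k0) * (INR k0 + (1 + 1 + 1 + 1 + 1)) ^ 2 <= 7 * L * (14 * L) ^ 2)
        by (apply Rmult_le_compat; try nra).
      nra.
Qed.
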